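(* Let $k$ be an algebraically closed field of characteristic $0$, $n\ge1$, $d\ge2$, let $f\in\mathrm{End}^1_d$ and $F=s_n(f)$ its $n$-th symmetric power. For $P\in\mathbb{P}^1$ let $H_P=\{\Phi\in\mathcal{F}^1_n:\Phi(P)=0\}$. Then the hyperplane $H_P$ is improper under $F$ if and only if $P$ is preperiodic under $f$.
   Context: $\mathcal{F}^1_n\cong\mathbb{P}^n$ is the projective space of binary forms of degree $n$; the Vieta map $\eta:(\mathbb{P}^1)^n\to\mathcal{F}^1_n$ sends $((a_1:b_1),\dots,(a_n:b_n))$ to $\prod_i (b_i x - a_i y)$. The $n$-th symmetric power of $f$ is the unique degree-$d$ endomorphism $F$ of $\mathcal{F}^1_n$ with $F(\eta(P_1,\dots,P_n))=\eta(f(P_1),\dots,f(P_n))$ for all $P_i\in\mathbb{P}^1$. A hypersurface $H\subset\mathbb{P}^n$ is improper under $F$ if for every irreducible component $Z$ of $H$ there exist integers $0\le i_0<\dots<i_n$ with $F^{i_0}(Z)\cap\dots\cap F^{i_n}(Z)\neq\varnothing$. $P$ is preperiodic under $f$ if $f^s(P)=f^t(P)$ for some distinct $s,t\ge0$. *)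

From HB Require Import structures.
From mathcomp Require Import all_boot all_order all_algebra.
From mathcomp Require Import mpoly.
Set Implicit Arguments. Unset Strict Implicit. Unset Printing Implicit Defensive.
Import Order.TTheory GRing.Theory.
Local Open Scope ring_scope.

(* Points of P^(m-1) are represented by nonzero vectors
   v : 'I_m -> k, considered up to a nonzero scalar. *)
Section Defs.
Variable k : closedFieldType.

Definition nzv (m : nat) (v : 'I_m -> k) : Prop := exists i, v i != 0.

Definition peq (m : nat) (v w : 'I_m -> k) : Prop :=
  exists2 c : k, c != 0 & forall i, v i = c * w i.

Definition is_endo (m d : nat) (F : 'I_m -> {mpoly k[m]}) : Prop :=
  (forall j, F j \is d.-homog) /\
  (forall v : 'I_m -> k, (forall j, (F j).@[v] = 0) -> forall i, v i = 0).

Definition evF (m : nat) (F : 'I_m -> {mpoly k[m]}) (v : 'I_m -> k) : 'I_m -> k :=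
  fun j => (F j).@[v].

Definition iterF (m : nat) (F : 'I_m -> {mpoly k[m]}) (i : nat) (v : 'I_m -> k) :=
  iter i (evF F) v.

(* A binary form of degree n, Phi = sum_j c_j x^j y^(n-j), is identified with
   its coefficient vector c : 'I_n.+1 -> k (this identifies F^1_n with P^n).
   The Vieta map: ((a_i:b_i))_i |-> prod_i (b_i x - a_i y).  Its coefficients
   are those of the dehomogenised polynomial prod_i (b_i X - a_i). *)
Definition vieta (n : nat) (P : 'I_n -> 'I_2 -> k) : 'I_n.+1 -> k :=
  fun j => (\prod_(i < n) (P i 1 *: 'X - (P i 0)%:P))`_j.

Definition is_sympow (n d : nat) (f : 'I_2 -> {mpoly k[2]})
    (F : 'I_n.+1 -> {mpoly k[n.+1]}) : Prop :=
  @is_endo n.+1 d F /\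
  forall P : 'I_n -> 'I_2 -> k, (forall i, nzv (P i)) ->
    peq (evF F (vieta P)) (vieta (fun i => evF f (P i))).

(* Defining linear form of the hyperplane H_P = {Phi : Phi(P) = 0},
   P = (a:b):  Phi(a,b) = sum_j c_j a^j b^(n-j). *)
Definition hypP (n : nat) (P : 'I_2 -> k) : {mpoly k[n.+1]} :=
  \sum_(j < n.+1) (P 0 ^+ j * P 1 ^+ (n - j)) *: 'X_j.

Definition mirred (m : nat) (g : {mpoly k[m]}) : Prop :=
  g != 0 /\ g \isn't a GRing.unit /\
  forall a b : {mpoly k[m]}, g = a * b -> a \is a GRing.unit \/ b \is a GRing.unit.

(* The hypersurface V(G) in P^(m-1) is improper under F: for every irreducible
   component Z = V(g) (g an irreducible factor of G) there are indices
   i_0 < ... < i_(m-1) with F^(i_0)(Z) /\ ... /\ F^(i_(m-1))(Z) nonempty. *)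
Definition improper (m : nat) (F : 'I_m -> {mpoly k[m]}) (G : {mpoly k[m]}) : Prop :=
  forall g : {mpoly k[m]}, mirred g -> (exists h, G = g * h) ->
    exists i : 'I_m -> nat,
      (forall j1 j2 : 'I_m, (j1 < j2)%N -> (i j1 < i j2)%N) /\
      exists w : 'I_m -> k, nzv w /\
        forall j : 'I_m, exists z : 'I_m -> k,
          [/\ nzv z, g.@[z] = 0 & peq w (iterF F (i j) z)].

Definition preperiodic (f : 'I_2 -> {mpoly k[2]}) (P : 'I_2 -> k) : Prop :=
  exists s t : nat, s <> t /\ peq (iterF f s P) (iterF f t P).

End Defs.

From mathcomp Require Import all_boot all_algebra.
From mathcomp Require Import mpoly.
From mathcomp Require Import ring zify.
Import GRing.Theory.
Local Open Scope ring_scope.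
Set Implicit Arguments. Unset Strict Implicit.

(* By Vieta, a point of P^n = F^1_n is an unordered n-tuple of points of P^1,
   H_P is the set of tuples containing P, and F acts on tuples entrywise by f;
   hence F^i maps H_P into H_(f^i P).  Being a hyperplane, H_P is irreducible.
   If f^(s + p) P = f^s P with p > 0, the tuple (P, ..., P) in H_P is sent by
   each of F^(s + j p), j = 0, ..., n, to the single point (f^s P, ..., f^s P).
   Conversely, a point common to F^(i_0)(H_P), ..., F^(i_n)(H_P) is an n-tuple
   containing each of the n + 1 points f^(i_j) P, so two of them coincide. *)

Section ProjectiveSpace.
Variable k : closedFieldType.

Lemma peq_refl m (v : 'I_m -> k) : peq v v.
Proof. by exists 1; rewrite ?oner_neq0 // => i; rewrite mul1r. Qed.

Lemma peq_sym m (v w : 'I_m -> k) : peq v w -> peq w v.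
Proof.
case=> c c0 vw; exists c^-1; first by rewrite invr_eq0.
by move=> i; rewrite vw mulrA mulVf // mul1r.
Qed.

Lemma peq_trans m (u v w : 'I_m -> k) : peq u v -> peq v w -> peq u w.
Proof.
case=> c c0 uv [c' c'0 vw]; exists (c * c'); first by rewrite mulf_neq0.
by move=> i; rewrite uv vw mulrA.
Qed.

Lemma meval_homog_scale m d (p : {mpoly k[m]}) (c : k) (v : 'I_m -> k) :
  p \is d.-homog -> p.@[fun i => c * v i] = c ^+ d * p.@[v].
Proof.
move=> hp; rewrite !mevalE big_distrr /=; apply: eq_big_seq => mo mo_p.
rewrite mulrCA; congr (_ * _).
under eq_bigr do rewrite exprMn.
by rewrite big_split /= prodrXr -mdegE (dhomog_mf hp mo_p).
Qed.

Lemma evF_peq m d (F : 'I_m -> {mpoly k[m]}) v w :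
  is_endo d F -> peq v w -> peq (evF F v) (evF F w).
Proof.
case=> homF _ [c c0 vw]; exists (c ^+ d); first by rewrite expf_neq0.
by move=> j; rewrite /evF -(meval_homog_scale _ _ (homF j)); apply: meval_eq.
Qed.

Lemma evF_nzv m d (F : 'I_m -> {mpoly k[m]}) v :
  is_endo d F -> nzv v -> nzv (evF F v).
Proof.
case=> _ noZeroF [i vi_neq0].
have [j Fj_neq0 | Fv_eq0] := pickP (fun j => (F j).@[v] != 0); first by exists j.
by move: vi_neq0; rewrite noZeroF ?eqxx // => j; apply/eqP/negbFE/Fv_eq0.
Qed.

Lemma iterF_nzv m d (F : 'I_m -> {mpoly k[m]}) i v :
  is_endo d F -> nzv v -> nzv (iterF F i v).
Proof. by move=> endoF nzv_v; elim: i => //= i IH; apply: evF_nzv endoF IH. Qed.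

Lemma iterF_peq m d (F : 'I_m -> {mpoly k[m]}) i v w :
  is_endo d F -> peq v w -> peq (iterF F i v) (iterF F i w).
Proof. by move=> endoF vw; elim: i => //= i IH; apply: evF_peq endoF IH. Qed.

Lemma iterF_period m d (F : 'I_m -> {mpoly k[m]}) s p v : is_endo d F ->
  peq (iterF F (p + s) v) (iterF F s v) ->
  forall j, peq (iterF F (j * p + s) v) (iterF F s v).
Proof.
move=> endoF period; elim=> [|j IH]; first exact: peq_refl.
rewrite mulSn -addnA /iterF iterD.
by apply: peq_trans (iterF_peq p endoF IH) _; rewrite /iterF -iterD.
Qed.

End ProjectiveSpace.

Section ProjectiveLine.
Variable k : closedFieldType.
Implicit Types u v : 'I_2 -> k.

(* Vanishes iff u and v are the same point of P^1; [cross u P] is the value at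
   P of the linear form [u 1 * x - u 0 * y] whose root is u. *)
Definition cross u v := u 1 * v 0 - u 0 * v 1.

Lemma ord2P (i : 'I_2) : i = 0 \/ i = 1.
Proof. by case: i => [[|[|]]] // ?; [left | right]; apply: val_inj. Qed.

Lemma nzv2 u : nzv u -> u 0 != 0 \/ u 1 != 0.
Proof. by case=> i; case: (ord2P i) => ->; auto. Qed.

Lemma crossvv u : cross u u = 0.
Proof. by rewrite /cross mulrC subrr. Qed.

Lemma peq_cross_eq0 u u' v v' :
  peq u u' -> peq v v' -> cross u v = 0 -> cross u' v' = 0.
Proof.
case=> c c0 uu' [c' c'0 vv']; rewrite /cross !uu' !vv' => /eqP.
have -> : c * u' 1 * (c' * v' 0) - c * u' 0 * (c' * v' 1) = c * c' * cross u' v'.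
  by rewrite /cross; ring.
by rewrite !mulf_eq0 (negbTE c0) (negbTE c'0) => /eqP.
Qed.

Lemma cross_eq0P u v : nzv u -> nzv v -> cross u v = 0 <-> peq u v.
Proof.
move=> nzu nzv_v; split => [|uv]; last first.
  by apply: peq_cross_eq0 (crossvv v); [apply: peq_sym | apply: peq_refl].
rewrite /cross => /eqP; rewrite subr_eq0 => /eqP u1v0.
have [v0|v0_neq0] := eqVneq (v 0) 0.
  have v1_neq0 : v 1 != 0 by case: (nzv2 nzv_v); rewrite ?v0 ?eqxx.
  have u0 : u 0 = 0.
    by apply/eqP; move/eqP: u1v0; rewrite v0 mulr0 eq_sym mulf_eq0 (negbTE v1_neq0) orbF.
  have u1_neq0 : u 1 != 0 by case: (nzv2 nzu); rewrite ?u0 ?eqxx.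
  exists (u 1 / v 1); first by rewrite mulf_neq0 ?invr_eq0.
  by move=> i; case: (ord2P i) => ->; rewrite ?u0 ?v0 ?mulr0 ?mulfVK.
have u0_neq0 : u 0 != 0.
  apply/eqP => u0; move/eqP: u1v0; rewrite u0 mul0r mulf_eq0 (negbTE v0_neq0) orbF => /eqP u1.
  by case: (nzv2 nzu); rewrite ?u0 ?u1 eqxx.
exists (u 0 / v 0); first by rewrite mulf_neq0 ?invr_eq0.
by move=> i; case: (ord2P i) => ->; rewrite ?mulfVK // mulrAC -u1v0 mulfK.
Qed.

End ProjectiveLine.

Section BinaryForms.
Variable k : closedFieldType.
Implicit Types u P : 'I_2 -> k.

Definition linfactor u : {poly k} := u 1 *: 'X - (u 0)%:P.

(* The value at P of the binary form of degree n whose dehomogenisation is p. *)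
Definition homog_eval n (p : {poly k}) P :=
  \sum_(j < n.+1) P 0 ^+ j * P 1 ^+ (n - j) * p`_j.

Lemma size_linfactor u : (size (linfactor u) <= 2)%N.
Proof.
rewrite /linfactor (leq_trans (size_polyD _ _)) // size_polyN geq_max.
by rewrite (leq_trans (size_scale_leq _ _)) ?size_polyX // (leq_trans (size_polyC_leq1 _)).
Qed.

Lemma size_prod_linfactor n (Q : 'I_n -> 'I_2 -> k) :
  (size (\prod_(i < n) linfactor (Q i))%R <= n.+1)%N.
Proof.
elim: n Q => [|n IH] Q; first by rewrite big_ord0 size_poly1.
rewrite big_ord_recr /= (leq_trans (size_polyMleq _ _)) //.
rewrite -subn1 leq_subLR (leq_trans (leq_add (IH _) (size_linfactor _))) //.
by rewrite addnC.
Qed.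

Lemma linfactor_neq0 u : nzv u -> linfactor u != 0.
Proof.
move=> nzu; apply/eqP => lin_u0.
have : (linfactor u)`_0 = - u 0 by rewrite coefB coefZ coefX coefC /= mulr0 sub0r.
have : (linfactor u)`_1 = u 1 by rewrite coefB coefZ coefX coefC /= mulr1 subr0.
rewrite lin_u0 !coef0 => /esym u1 /eqP; rewrite eq_sym oppr_eq0 => /eqP u0.
by case: (nzv2 nzu); rewrite ?u0 ?u1 eqxx.
Qed.

Lemma linfactor_scale u u' c : (forall i, u i = c * u' i) -> linfactor u = c *: linfactor u'.
Proof. by move=> uu'; rewrite /linfactor !uu' scalerBr scalerA polyCM mul_polyC. Qed.

Lemma homog_evalM_linfactor n (p : {poly k}) u P : (size p <= n.+1)%N ->
  homog_eval n.+1 (p * linfactor u) P = homog_eval n p P * cross u P.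
Proof.
move=> size_p; rewrite /homog_eval.
set S := \sum_(j < n.+1) _.
have shiftX : \sum_(j < n.+2) P 0 ^+ j * P 1 ^+ (n.+1 - j) * (p * 'X)`_j = P 0 * S.
  rewrite big_ord_recl coefMX /= mulr0 add0r mulr_sumr; apply: eq_bigr => j _.
  by rewrite coefMX /bump /= add1n subSS exprS; ring.
have pad : \sum_(j < n.+2) P 0 ^+ j * P 1 ^+ (n.+1 - j) * p`_j = P 1 * S.
  rewrite big_ord_recr /= (nth_default 0 size_p) mulr0 addr0 mulr_sumr.
  apply: eq_bigr => j _; have j_le_n : (j <= n)%N := ltn_ord j.
  by rewrite (subSn j_le_n) exprS; ring.
have coef_lin j : (p * linfactor u)`_j = u 1 * (p * 'X)`_j - u 0 * p`_j.
  by rewrite /linfactor mulrBr -scalerAr coefB coefZ coefMC [_ * u 0]mulrC.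
under eq_bigr do rewrite coef_lin mulrBr mulrCA [X in _ - X]mulrCA.
by rewrite sumrB -!mulr_sumr shiftX pad /cross; ring.
Qed.

Lemma homog_eval_prod n (Q : 'I_n -> 'I_2 -> k) P :
  homog_eval n (\prod_(i < n) linfactor (Q i)) P = \prod_(i < n) cross (Q i) P.
Proof.
elim: n Q => [|n IH] Q; first by rewrite /homog_eval !big_ord0 big_ord1 coef1 !expr0 !mul1r.
by rewrite !big_ord_recr /= homog_evalM_linfactor ?IH ?size_prod_linfactor.
Qed.

Lemma hypP_meval n P (v : 'I_n.+1 -> k) :
  (hypP n P).@[v] = \sum_(j < n.+1) P 0 ^+ j * P 1 ^+ (n - j) * v j.
Proof.
rewrite /hypP (big_morph (meval v) (mevalD v) (meval0 v)).
by apply: eq_bigr => j _; rewrite mevalZ mevalXU.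
Qed.

Lemma hypP_meval_scale n P (v w : 'I_n.+1 -> k) c : (forall i, v i = c * w i) ->
  (hypP n P).@[v] = c * (hypP n P).@[w].
Proof.
by move=> vw; rewrite !hypP_meval mulr_sumr; apply: eq_bigr => j _; rewrite vw mulrCA.
Qed.

Lemma hypP_peq_eq0 n P (v w : 'I_n.+1 -> k) :
  peq v w -> (hypP n P).@[w] = 0 -> (hypP n P).@[v] = 0.
Proof. by case=> c _ vw w_eq0; rewrite (hypP_meval_scale _ vw) w_eq0 mulr0. Qed.

Lemma hypP_vieta n (Q : 'I_n -> 'I_2 -> k) P :
  (hypP n P).@[vieta Q] = \prod_(i < n) cross (Q i) P.
Proof. by rewrite hypP_meval -homog_eval_prod. Qed.

Lemma hypP_vieta_eq0 n (Q : 'I_n -> 'I_2 -> k) P : (forall i, nzv (Q i)) -> nzv P ->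
  (hypP n P).@[vieta Q] = 0 <-> exists i, peq (Q i) P.
Proof.
move=> nzQ nzP; rewrite hypP_vieta; split.
  by move=> /eqP /prodf_eq0 [i _ /eqP /cross_eq0P]; exists i; auto.
by case=> i /cross_eq0P Qi; apply/eqP/prodf_eq0; exists i => //; apply/eqP/Qi.
Qed.

Lemma vieta_nzv n (Q : 'I_n -> 'I_2 -> k) : (forall i, nzv (Q i)) -> nzv (vieta Q).
Proof.
move=> nzQ; set p := \prod_(i < n) linfactor (Q i).
have p_neq0 : p != 0 by apply/prodf_neq0 => i _; apply: linfactor_neq0.
have deg_lt : ((size p).-1 < n.+1)%N.
  by rewrite (leq_trans _ (size_prod_linfactor Q)) // prednK // lt0n size_poly_eq0.
by exists (Ordinal deg_lt); rewrite /vieta -/p -lead_coefE lead_coef_eq0.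
Qed.

Lemma vieta_peq n (Q Q' : 'I_n -> 'I_2 -> k) :
  (forall i, peq (Q i) (Q' i)) -> peq (vieta Q) (vieta Q').
Proof.
move=> QQ'; have [c c_neq0 Qc] := fin_all_exists2 QQ'.
exists (\prod_(i < n) c i); first by apply/prodf_neq0 => i _; apply: c_neq0.
move=> j; rewrite /vieta (eq_bigr (fun i => c i *: linfactor (Q' i))) => [|i _].
  by rewrite scaler_prod coefZ.
exact: linfactor_scale.
Qed.

(* Roots missing from the dehomogenisation lie at infinity, represented by
   (-1 : 0), whose linear factor is 1. *)
Lemma vieta_surj n (w : 'I_n.+1 -> k) : nzv w ->
  exists2 Q : 'I_n -> 'I_2 -> k, (forall i, nzv (Q i)) & peq w (vieta Q).
Proof.
case=> j0 wj0_neq0; set p := \poly_(j < n.+1) w (inord j).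
have coef_p (j : 'I_n.+1) : p`_j = w j by rewrite coef_poly ltn_ord inord_val.
have p_neq0 : p != 0 by apply: contraNneq wj0_neq0 => p0; rewrite -coef_p p0 coef0.
have [r p_split] := closed_field_poly_normal p.
have size_r : (size r <= n)%N.
  have := size_poly n.+1 (fun j => w (inord j)).
  by rewrite -/p p_split size_scale ?lead_coef_eq0 // size_prod_XsubC.
pose Q (i : 'I_n) (e : 'I_2) : k :=
  if (i < size r)%N then (if e == 0 then r`_i else 1) else (if e == 0 then -1 else 0).
exists Q.
  move=> i; rewrite /Q; case: (i < size r)%N; first by exists 1; rewrite /= oner_neq0.
  by exists 0; rewrite /= oppr_eq0 oner_neq0.
have prod_Q : \prod_(i < n) linfactor (Q i) = \prod_(z <- r) ('X - z%:P).
  rewrite (eq_bigr (fun i : 'I_n => if (i < size r)%N then 'X - (r`_i)%:P else 1)).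
    rewrite -(big_mkord xpredT (fun i => if (i < size r)%N then 'X - (r`_i)%:P else 1)).
    rewrite (big_cat_nat (n := size r)) //= [X in _ * X]big1_seq ?mulr1.
      rewrite [RHS](big_nth 0) big_nat_cond [RHS]big_nat_cond.
      by apply: eq_bigr => i /andP [/andP [_ ->]].
    move=> i; rewrite mem_index_iota => /andP [_ /andP [size_r_le_i _]].
    by rewrite ltnNge size_r_le_i.
  move=> i _; rewrite /linfactor /Q /=; case: ifP => _ /=; first by rewrite scale1r.
  by rewrite scale0r sub0r -polyCN opprK.
exists (lead_coef p); first by rewrite lead_coef_eq0.
by move=> j; rewrite /vieta prod_Q -coef_p {1}p_split coefZ.
Qed.

End BinaryForms.

Section Hyperplane.
Variable k : closedFieldType.

Lemma msize_unit m (p : {mpoly k[m]}) : p \is a GRing.unit -> msize p = 1%N.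
Proof.
case/unitrP => q [qp _].
have p_neq0 : p != 0 by apply: contra_eq_neq qp => ->; rewrite mulr0 eq_sym oner_neq0.
have q_neq0 : q != 0 by apply: contra_eq_neq qp => ->; rewrite mul0r eq_sym oner_neq0.
have := msizeM q_neq0 p_neq0; rewrite qp msize1 -subn1.
move: (msize_poly_eq0 p) (msize_poly_eq0 q); rewrite (negbTE p_neq0) (negbTE q_neq0).
by move: (msize p) (msize q) => a b; lia.
Qed.

Lemma msize1_unit m (p : {mpoly k[m]}) : msize p = 1%N -> p \is a GRing.unit.
Proof.
move/eqP/msize_poly1P => [c c_neq0 ->]; apply/unitrP; exists c^-1%:MP.
by rewrite -!mpolyCM mulVf ?mulfV.
Qed.

Lemma msizeM_eq2 m (a b : {mpoly k[m]}) : a != 0 -> b != 0 ->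
  msize (a * b) = 2%N -> msize a = 1%N \/ msize b = 1%N.
Proof.
move=> a_neq0 b_neq0; rewrite msizeM // -subn1.
move: (msize_poly_eq0 a) (msize_poly_eq0 b); rewrite (negbTE a_neq0) (negbTE b_neq0).
by move: (msize a) (msize b) => i j; lia.
Qed.

Lemma hypP_neq0 n (P : 'I_2 -> k) : nzv P -> hypP n P != 0.
Proof.
move=> nzP; apply/eqP => hyp0.
have hyp_delta (j0 : 'I_n.+1) : P 0 ^+ j0 * P 1 ^+ (n - j0) = 0.
  have := hypP_meval P (fun j : 'I_n.+1 => (j == j0)%:R).
  rewrite hyp0 meval0 (bigD1 j0) //= eqxx mulr1 big1 => [|j /negbTE ->]; last by rewrite mulr0.
  by rewrite addr0.
case: (nzv2 nzP) => [P0_neq0|P1_neq0].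
  by move/eqP: (hyp_delta ord_max); rewrite /= subnn mulr1 expf_eq0 (negbTE P0_neq0) andbF.
by move/eqP: (hyp_delta ord0); rewrite /= subn0 mul1r expf_eq0 (negbTE P1_neq0) andbF.
Qed.

Lemma msize_hypP n (P : 'I_2 -> k) : nzv P -> msize (hypP n P) = 2%N.
Proof.
move=> nzP; apply/eqP; rewrite eqn_leq; apply/andP; split.
  apply: leq_trans (msize_sum _ _ _) _; apply/bigmax_leqP => j _.
  by apply: leq_trans (msizeZ_le _ _) _; rewrite msizeX mdeg1.
rewrite ltnNge; apply/negP => /msize1_polyC hypC.
have := hypP_meval P (fun _ : 'I_n.+1 => 0); rewrite hypC mevalC big1 => [hyp0|j _]; last by rewrite mulr0.
by move: (hypP_neq0 n nzP); rewrite hypC hyp0 mpolyC0 eqxx.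
Qed.

Lemma mirred_hypP n (P : 'I_2 -> k) : nzv P -> mirred (hypP n P).
Proof.
move=> nzP; split; first exact: hypP_neq0.
split; first by apply/negP => /msize_unit; rewrite msize_hypP.
move=> a b hyp_ab.
have a_neq0 : a != 0 by apply: contraNneq (hypP_neq0 n nzP) => a0; rewrite hyp_ab a0 mul0r.
have b_neq0 : b != 0 by apply: contraNneq (hypP_neq0 n nzP) => b0; rewrite hyp_ab b0 mulr0.
have := msize_hypP n nzP; rewrite hyp_ab => /(msizeM_eq2 a_neq0 b_neq0).
by case=> /msize1_unit; auto.
Qed.

Lemma mirred_dvd_hypP n (P : 'I_2 -> k) (g h : {mpoly k[n.+1]}) : nzv P -> mirred g ->
  hypP n P = g * h -> exists2 c, c != 0 & h = c%:MP.
Proof.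
move=> nzP [g_neq0 [g_nunit _]] hyp_gh.
have h_neq0 : h != 0 by apply: contraNneq (hypP_neq0 n nzP) => h0; rewrite hyp_gh h0 mulr0.
have := msize_hypP n nzP; rewrite hyp_gh => /(msizeM_eq2 g_neq0 h_neq0) [/msize1_unit|].
  by rewrite (negbTE g_nunit).
by move/eqP/msize_poly1P.
Qed.

End Hyperplane.

Section SymmetricPower.
Variables (k : closedFieldType) (n d : nat).
Variables (f : 'I_2 -> {mpoly k[2]}) (F : 'I_n.+1 -> {mpoly k[n.+1]}).
Hypotheses (endo_f : is_endo d f) (sympow_F : is_sympow d f F).

Let endo_F : is_endo d F. Proof. by case: sympow_F. Qed.

Lemma iterF_vieta i (Q : 'I_n -> 'I_2 -> k) : (forall l, nzv (Q l)) ->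
  peq (iterF F i (vieta Q)) (vieta (fun l => iterF f i (Q l))).
Proof.
case: sympow_F => _ F_vieta nzQ; elim: i => [|i IH]; first exact: peq_refl.
apply: peq_trans (evF_peq endo_F IH) _.
by apply: F_vieta => l; apply: iterF_nzv endo_f (nzQ l).
Qed.

Lemma iterF_hypP_eq0 i (P : 'I_2 -> k) (z : 'I_n.+1 -> k) : nzv P -> nzv z ->
  (hypP n P).@[z] = 0 -> (hypP n (iterF f i P)).@[iterF F i z] = 0.
Proof.
move=> nzP nzz z_hyp; have [R nzR zR] := vieta_surj nzz.
have [l RlP] : exists l, peq (R l) P.
  by apply/hypP_vieta_eq0 => //; apply: hypP_peq_eq0 (peq_sym zR) z_hyp.
apply: hypP_peq_eq0 (peq_trans (iterF_peq i endo_F zR) (iterF_vieta i nzR)) _.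
apply/hypP_vieta_eq0; last by exists l; apply: iterF_peq endo_f RlP.
  by move=> l'; apply: iterF_nzv endo_f (nzR l').
exact: iterF_nzv endo_f nzP.
Qed.

Lemma improper_hypP_preperiodic (P : 'I_2 -> k) : nzv P ->
  improper F (hypP n P) -> preperiodic f P.
Proof.
move=> nzP /(_ _ (mirred_hypP n nzP) (ex_intro _ 1 (esym (mulr1 _)))).
case=> i [i_mono [w [nzw w_img]]].
have w_hyp (j : 'I_n.+1) : (hypP n (iterF f (i j) P)).@[w] = 0.
  have [z [nzz z_hyp wz]] := w_img j.
  exact: hypP_peq_eq0 wz (iterF_hypP_eq0 _ nzP nzz z_hyp).
have [S nzS wS] := vieta_surj nzw.
have root_of (j : 'I_n.+1) : exists l, peq (S l) (iterF f (i j) P).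
  apply/hypP_vieta_eq0 => //; first exact: iterF_nzv endo_f nzP.
  exact: hypP_peq_eq0 (peq_sym wS) (w_hyp j).
have [l Sl] := fin_all_exists root_of.
have /injectivePn [j1 [j2 j12 l12]] : ~~ injectiveb l.
  by apply/injectiveP => l_inj; have := leq_card l l_inj; rewrite !card_ord ltnn.
exists (i j1), (i j2); split.
  move=> i12; move: j12; case: (ltngtP j1 j2) => [/i_mono|/i_mono|/val_inj ->];
  by rewrite ?i12 ?ltnn ?eqxx.
by apply: peq_trans (peq_sym (Sl j1)) _; rewrite l12.
Qed.

Lemma preperiodic_improper_hypP (P : 'I_2 -> k) : (1 <= n)%N -> nzv P ->
  preperiodic f P -> improper F (hypP n P).
Proof.
move=> n_gt0 nzP [s0 [t0 [st0 P_st0]]].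
have [s [p [p_gt0 P_sp]]] :
    exists s p, (0 < p)%N /\ peq (iterF f (p + s) P) (iterF f s P).
  case: (ltngtP s0 t0) st0 => [lt_st|lt_ts|->] // _.
    by exists s0, (t0 - s0)%N; rewrite subn_gt0 (subnK (ltnW lt_st)); split => //; apply: peq_sym.
  by exists t0, (s0 - t0)%N; rewrite subn_gt0 (subnK (ltnW lt_ts)).
move=> g g_irr [h hyp_gh]; have [c c_neq0 hc] := mirred_dvd_hypP nzP g_irr hyp_gh.
exists (fun j : 'I_n.+1 => j * p + s)%N; split.
  by move=> j1 j2 j12; rewrite ltn_add2r ltn_pmul2r.
exists (vieta (fun _ : 'I_n => iterF f s P)); split.
  by apply: vieta_nzv => _; apply: iterF_nzv endo_f nzP.
move=> j; exists (vieta (fun _ : 'I_n => P)); split.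
- exact: vieta_nzv.
- have : (hypP n P).@[vieta (fun _ : 'I_n => P)] = 0.
    by apply/hypP_vieta_eq0 => //; exists (Ordinal n_gt0); apply: peq_refl.
  rewrite hyp_gh mevalM hc mevalC => /eqP; rewrite mulf_eq0 (negbTE c_neq0) orbF.
  by move/eqP.
- apply: peq_sym; apply: peq_trans (iterF_vieta _ _) _ => //.
  by apply: vieta_peq => _; apply: iterF_period endo_f P_sp j.
Qed.

End SymmetricPower.

Theorem mainTheorem11 (k : closedFieldType) (char0 : [pchar k] =i pred0)
  (n d : nat) (hn : (1 <= n)%N) (hd : (2 <= d)%N)
  (f : 'I_2 -> {mpoly k[2]}) (hf : @is_endo k 2 d f)
  (F : 'I_n.+1 -> {mpoly k[n.+1]}) (hF : @is_sympow k n d f F)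
  (P : 'I_2 -> k) (hP : nzv P) :
  improper F (hypP n P) <-> preperiodic f P.
Proof.
split; first exact: improper_hypP_preperiodic hf hF P hP.
exact: preperiodic_improper_hypP hf hF P hn hP.
Qed.
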